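(* Let $\mathbf{x}$ be a feasible solution of $\textsc{Dir-MC-Rel}$. For each edge $e=(u,v)\in E$, let $a_1(u)\le a_2(u)$ be the two smallest values in the multiset $\{d_G(s_1,u),\dots,d_G(s_k,u)\}$, and define $I_1(e)=[a_1(u),a_1(u)+x_e)$ and $I_2(e)=[a_2(u),a_2(u)+x_e)$. For $\theta\in(0,1)$ let $C'(\theta)=\{e\in E:\theta\in I_1(e)\cup I_2(e)\}$. Then for every $\theta\in(0,1)$, $C'(\theta)\supseteq C(\theta)$ and $C'(\theta)$ is a directed multiway cut; and if $\theta$ is uniform on $(0,1)$ then $\Pr[e\in C'(\theta)]\le 2x_e$ for every $e\in E$, so $\mathbb{E}[w(C'(\theta))]\le 2\sum_e w_ex_e$.
   Context: $G=(V,E)$ is a directed graph with non-negative edge weights $w_e$ and distinct terminals $s_1,\dots,s_k$, $k\ge2$. A directed multiway cut is $E'\subseteq E$ such that $G-E'$ has no directed path from $s_i$ to $s_j$ for $i\neq j$; $w(E')=\sum_{e\in E'}w_e$. For $i\neq j$, $\mathcal{P}_{ij}$ is the set of directed paths from $s_i$ to $s_j$ in $G$. $\textsc{Dir-MC-Rel}$: minimize $\sum_e w_e x_e$ s.t. $\sum_{e\in p}x_e\ge1$ for all $p\in\mathcal{P}_{ij}$, $i\ne j$, and $x\ge0$. $d_G(a,b)$ is the shortest directed path length from $a$ to $b$ in $G$ with edge lengths $\mathbf{x}$ ($+\infty$ if none). Form $G^+$ by adding new vertices $t_1,\dots,t_k$ and edges $(t_i,s_j)$ for all $i\neq j$ with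 $x$-value $0$; $d$ denotes shortest-path distance in $G^+$ w.r.t. $\mathbf{x}$; $B(v,r)=\{u:d(v,u)\le r\}$; $\delta^+(A)$ is the set of edges of $G^+$ with tail in $A$ and head outside $A$; $C(\theta)=\bigcup_{i=1}^k\delta^+(B(t_i,\theta))$. *)

From HB Require Import structures.
From mathcomp Require Import all_boot.
From Stdlib Require Import Reals ClassicalEpsilon.

Set Implicit Arguments.
Unset Strict Implicit.
Unset Printing Implicit Defensive.

Record digraph := Digraph {
  vert : finType;
  edge : finType;
  tl : edge -> vert;
  hd : edge -> vert }.

Local Open Scope R_scope.

(* Extended non-negative reals: None = +infinity. *)
Definition ole (a b : option R) : Prop :=
  match a, b with
  | Some a, Some b => a <= b
  | _, None => True
  | None, Some _ => False
  end.

Definition dle (a : option R) (r : R) : Prop :=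
  match a with Some a => a <= r | None => False end.

Section Graph.
Variable G : digraph.

Fixpoint walk (a b : vert G) (p : seq (edge G)) : Prop :=
  match p with
  | [::] => a = b
  | e :: p' => tl e = a /\ walk (hd e) b p'
  end.

Definition dpath (a b : vert G) (p : seq (edge G)) : Prop :=
  walk a b p /\ uniq (a :: map (@hd G) p).

Definition plen (x : edge G -> R) (p : seq (edge G)) : R :=
  foldr (fun e r => x e + r) 0 p.

Definition is_inf (S : R -> Prop) (m : R) : Prop :=
  (forall y, S y -> m <= y) /\ (forall m', (forall y, S y -> m' <= y) -> m' <= m).

Definition spdist (x : edge G -> R) (a b : vert G) : option R :=
  epsilon (inhabits None) (fun o =>
    match o with
    | None => ~ (exists p, dpath a b p)
    | Some m => (exists p, dpath a b p) /\
                is_inf (fun y => exists p, dpath a b p /\ y = plen x p) m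
    end).

Definition out_cut (A : vert G -> Prop) (f : edge G) : Prop :=
  A (tl f) /\ ~ A (hd f).

End Graph.

Definition feasible (G : digraph) (k : nat) (s : 'I_k -> vert G)
  (x : edge G -> R) : Prop :=
  (forall e, 0 <= x e) /\
  (forall i j : 'I_k, i <> j -> forall p, dpath (s i) (s j) p -> 1 <= plen x p).

Definition is_dir_multiway_cut (G : digraph) (k : nat) (s : 'I_k -> vert G)
  (F : edge G -> Prop) : Prop :=
  forall i j : 'I_k, i <> j -> forall p, dpath (s i) (s j) p ->
    exists e, e \in p /\ F e.

(* G^+ : new vertices t_1..t_k and edges (t_i, s_j), i <> j *)
Definition plus_edge (k : nat) := {p : 'I_k * 'I_k | p.1 != p.2}.

Definition Gplus (G : digraph) (k : nat) (s : 'I_k -> vert G) : digraph :=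
  {| vert := (vert G + 'I_k)%type;
     edge := (edge G + plus_edge k)%type;
     tl := fun f => match f with
                    | inl e => inl (tl e)
                    | inr p => inr (sval p).1 end;
     hd := fun f => match f with
                    | inl e => inl (hd e)
                    | inr p => inl (s (sval p).2) end |}.

Definition xplus (G : digraph) (k : nat) (s : 'I_k -> vert G) (x : edge G -> R)
  : edge (Gplus s) -> R :=
  fun f => match f with inl e => x e | inr _ => 0 end.
Arguments xplus {G k} s x.

Definition ballT (G : digraph) (k : nat) (s : 'I_k -> vert G) (x : edge G -> R)
  (i : 'I_k) (r : R) : vert (Gplus s) -> Prop :=
  fun u => dle (spdist (xplus s x) (inr i : vert (Gplus s)) u) r.
Arguments ballT {G k} s x i r _.

Definition Ccut (G : digraph) (k : nat) (s : 'I_k -> vert G) (x : edge G -> R)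
  (theta : R) : edge (Gplus s) -> Prop :=
  fun f => exists i : 'I_k, out_cut (ballT s x i theta) f.
Arguments Ccut {G k} s x theta _.

(* a1 <= a2 are the two smallest values of the multiset {f i | i < k}:
   a1 = f i1 with i1 a minimizer, a2 = f i2 with i2 <> i1 minimizing over
   the remaining indices. *)
Definition two_smallest (k : nat) (f : 'I_k -> option R) (a1 a2 : option R) : Prop :=
  exists i1 : 'I_k, (forall j, ole (f i1) (f j)) /\ a1 = f i1 /\
  exists i2 : 'I_k, i2 <> i1 /\ (forall j, j <> i1 -> ole (f i2) (f j)) /\ a2 = f i2.

Definition in_int (a : option R) (xe theta : R) : Prop :=
  match a with Some a => a <= theta < a + xe | None => False end.

Definition Cprime (G : digraph) (x : edge G -> R) (a1 a2 : vert G -> option R)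
  (theta : R) (e : edge G) : Prop :=
  in_int (a1 (tl e)) (x e) theta \/ in_int (a2 (tl e)) (x e) theta.

Definition indic (P : Prop) : R :=
  if excluded_middle_informative P then 1 else 0.

Definition sumE (G : digraph) (F : edge G -> R) : R :=
  \big[Rplus/0]_(e : edge G) F e.

From Pilot Require Import Defs.
From HB Require Import structures.
From mathcomp Require Import all_boot.
From Stdlib Require Import Reals ClassicalEpsilon Lra Classical.
From Coquelicot Require Import Coquelicot.
Local Open Scope R_scope.

(* Let B_j be the set of vertices within distance theta of some terminal other
   than s_j.  In G^+ the distance from t_j to a vertex u of G is the least
   d_G(s_l, u), l <> j, and this minimum is attained at a_1(u) or a_2(u).  Hence
   if an edge e = (u, v) leaves B_j, the value a in {a_1(u), a_2(u)} realising it
   satisfies a <= theta, while a + x_e > theta since d_G(s_l, v) <= d_G(s_l, u) + x_e: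
   so e is in C'(theta).  This gives C(theta) within C'(theta), and C'(theta) is a
   multiway cut because an s_i-s_j path starts in B_j (theta > 0) and, by
   feasibility, ends outside it (theta < 1).  Finally I_1(e) and I_2(e) have length
   x_e, so theta lies in their union with probability at most 2 x_e. *)

Set Implicit Arguments.
Unset Strict Implicit.
Unset Printing Implicit Defensive.

Lemma ole_dle_trans D o r : ole D o -> dle o r -> dle D r.
Proof. by case: D; case: o => //= a b; lra. Qed.

Lemma dle_le_trans o r r' : dle o r -> r <= r' -> dle o r'.
Proof. by case: o => //= a; lra. Qed.

Section ShortestPaths.
Variable G : digraph.

Lemma walk_cat (a b c : vert G) p q :
  walk a b p -> walk b c q -> walk a c (p ++ q).
Proof.
elim: p a => [|e p IH] a /=; first by move=> ->.
by case=> <- Hp Hq; split => //; apply: IH.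
Qed.

Lemma walk_prefix (a b v : vert G) p :
  walk a b p -> v \in a :: map (@hd G) p -> exists q r, walk a v q /\ p = q ++ r.
Proof.
elim: p a => [|e p IH] a /=.
  by move=> ->; rewrite inE => /eqP ->; exists [::], [::].
case=> <- Hp; rewrite inE => /orP [/eqP ->|]; first by exists [::], (e :: p).
by case/(IH _ Hp) => q [r [Hq ->]]; exists (e :: q), r.
Qed.

Lemma walk_out_cut (A : vert G -> Prop) (a b : vert G) p :
  walk a b p -> A a -> ~ A b -> exists e, e \in p /\ out_cut A e.
Proof.
elim: p a => [|e p IH] a /=; first by move=> -> Hb /(_ Hb).
case=> <- Hp Ha Hb; case: (classic (A (hd e))) => He.
  by have [f [Hf HAf]] := IH _ Hp He Hb; exists f; rewrite inE Hf orbT.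
by exists e; rewrite inE eqxx.
Qed.

Variable x : edge G -> R.
Hypothesis x_ge0 : forall e, 0 <= x e.

Lemma plen_cat p q : plen x (p ++ q) = plen x p + plen x q.
Proof. by elim: p => [|e p IH] /=; [lra | rewrite IH; lra]. Qed.

Lemma plen_ge0 p : 0 <= plen x p.
Proof. by elim: p => [|e p IH] /=; [lra | have := x_ge0 e; lra]. Qed.

(* Appending [e] to a path, or cutting it back where [hd e] already occurs. *)
Lemma dpath_extend (a : vert G) e q :
  dpath a (tl e) q -> exists q', dpath a (hd e) q' /\ plen x q' <= plen x q + x e.
Proof.
move=> [Hq Hu]; case Hin: (hd e \in a :: map (@hd G) q).
  have [q' [r [Hq' Eq]]] := walk_prefix Hq Hin.
  exists q'; split.
    split => //; move: Hu; rewrite Eq map_cat -cat_cons cat_uniq.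
    by case/andP.
  by rewrite Eq plen_cat; have := plen_ge0 r; have := x_ge0 e; lra.
exists (q ++ [:: e]); split; last by rewrite plen_cat /=; lra.
split; first exact: (walk_cat Hq).
by rewrite map_cat -cat_cons cats1 rcons_uniq Hin Hu.
Qed.

Definition plens (a b : vert G) (y : R) : Prop :=
  exists p, dpath a b p /\ y = plen x p.

Lemma plens_inf (a b : vert G) :
  (exists p, dpath a b p) -> exists m, is_inf (plens a b) m.
Proof.
(* [completeness] provides suprema; take the one of the negated set *)
move=> [p Hp].
have Hb : bound (fun z => plens a b (- z)).
  by exists 0 => z [q [_ Hz]]; have := plen_ge0 q; lra.
have He : exists z, plens a b (- z).
  by exists (- plen x p), p; rewrite Ropp_involutive.
have [l [Hl1 Hl2]] := completeness _ Hb He.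
exists (- l); split.
  move=> y Hy; suff: y >= - l by lra.
  by apply/Rle_ge/Ropp_le_cancel; rewrite Ropp_involutive; apply: Hl1; rewrite Ropp_involutive.
move=> m' Hm'; suff: l <= - m' by lra.
by apply: Hl2 => z /Hm'; lra.
Qed.

Variant spdist_spec (a b : vert G) : option R -> Prop :=
  | SpdistNone : ~ (exists p, dpath a b p) -> spdist_spec a b None
  | SpdistSome m : (exists p, dpath a b p) -> is_inf (plens a b) m ->
      spdist_spec a b (Some m).

Lemma spdistP (a b : vert G) : spdist_spec a b (spdist x a b).
Proof.
rewrite /spdist; set P := fun o : option R => _.
have : exists o, P o.
  case: (classic (exists p, dpath a b p)) => Hp; last by exists None.
  by have [m Hm] := plens_inf Hp; exists (Some m).
move/(epsilon_spec (inhabits None) P); case: (epsilon _ P) => [m [Hp Hm]|Hp].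
  exact: SpdistSome.
exact: SpdistNone.
Qed.

Lemma spdist_le_plen (a b : vert G) p : dpath a b p -> dle (spdist x a b) (plen x p).
Proof.
move=> Hp; case: spdistP => [Hn|m _ [Hm _]]; first by case: Hn; exists p.
by apply: Hm; exists p.
Qed.

Lemma ole_spdist D (a b : vert G) :
  (forall p, dpath a b p -> dle D (plen x p)) -> ole D (spdist x a b).
Proof.
move=> HD; case: spdistP => [_|m [p0 Hp0] [_ Hm]]; first by case: D HD.
case: D HD (HD _ Hp0) => [d|] //= HD _.
by apply: Hm => y [p [Hp ->]]; apply: HD.
Qed.

Lemma spdist_path (a b : vert G) r : dle (spdist x a b) r -> exists p, dpath a b p.
Proof. by case: spdistP. Qed.

Lemma dle_spdist_edge (a : vert G) e r :
  dle (spdist x a (tl e)) r -> dle (spdist x a (hd e)) (r + x e).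
Proof.
case: spdistP => //= m _ Hm Hmr.
suff: forall eps, 0 < eps -> dle (spdist x a (hd e)) (m + x e + eps).
  case: spdistP => [Hn /(_ 1 Rlt_0_1)|m' _ _ Hle] //=.
  by apply: Rle_trans (Rplus_le_compat_r _ _ _ Hmr); apply: Rle_plus_epsilon.
(* otherwise [m + eps] would bound [plens a (tl e)] from below *)
move=> eps Heps; apply: NNPP => Hfar.
have : m + eps <= m; last by lra.
case: Hm => _; apply => _ [q [Hq ->]]; apply: Rnot_lt_le => Hlt; apply: Hfar.
have [q' [Hq' Hle]] := dpath_extend Hq.
by apply: dle_le_trans (spdist_le_plen Hq') _; lra.
Qed.

End ShortestPaths.

Section PlusGraph.
Variables (G : digraph) (k : nat) (s : 'I_k -> vert G) (x : edge G -> R).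
Hypothesis x_ge0 : forall e, 0 <= x e.
Let Gp := Gplus s.

Lemma xplus_ge0 (f : edge Gp) : 0 <= xplus s x f.
Proof. by case: f => [e|pe] /=; [apply: x_ge0 | lra]. Qed.

Lemma walk_map_inl (a b : vert G) q :
  walk a b q -> @walk Gp (inl a) (inl b) (map inl q).
Proof.
elim: q a => [|e q IH] a /=; first by move=> ->.
by case=> <- Hq; split => //; apply: IH.
Qed.

Lemma walk_inl (a b : vert G) P :
  @walk Gp (inl a) (inl b) P -> exists q, P = map inl q /\ walk a b q.
Proof.
elim: P a => [|[e|pe] P IH] a /=; first by case=> ->; exists [::].
  by case=> [[<-]] /IH [q [-> Hq]]; exists (e :: q).
by case.
Qed.

Lemma walk_to_inr (a : vert Gp) j P : @walk Gp a (inr j) P -> a = inr j.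
Proof. by elim: P a => [|[e|pe] P IH] a //= [_ /IH]. Qed.

Lemma plen_map_inl q : plen (xplus s x) (map inl q) = plen x q.
Proof. by elim: q => [|e q IH] //=; rewrite IH. Qed.

Lemma hd_map_inl q : map (@hd Gp) (map inl q) = map inl (map (@hd G) q).
Proof. by elim: q => //= e q ->. Qed.

Lemma uniq_map_inl (a : vert G) q :
  uniq ((inl a : vert Gp) :: map inl q) = uniq (a :: q).
Proof. by rewrite -(map_cons inl) map_inj_uniq // => ? ? []. Qed.

Lemma dpath_lift (i c : 'I_k) (Hic : i != c) (w : vert G) q :
  dpath (s c) w q ->
  exists P, @dpath Gp (inr i) (inl w) P /\ plen (xplus s x) P = plen x q.
Proof.
move=> [Hq Hu]; exists (inr (exist _ (i, c) Hic) :: map inl q).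
split; last by rewrite /= plen_map_inl; lra.
split; first by split => //; apply: walk_map_inl.
rewrite cons_uniq [map _ (_ :: _)]/= hd_map_inl uniq_map_inl Hu andbT.
by rewrite inE negb_or /=; apply/mapP => [[]].
Qed.

Lemma dpath_proj (i : 'I_k) (u : vert G) P :
  @dpath Gp (inr i) (inl u) P ->
  exists l, l <> i /\ exists q, dpath (s l) u q /\ plen (xplus s x) P = plen x q.
Proof.
case: P => [|f P] [Hw Hu]; first by [].
case: f Hw Hu => [e|[[i' l] Hil]] [Ht Hw] Hu; first by [].
case: Ht => Ei; subst i'; have [q [EP Hq]] := walk_inl Hw.
rewrite {}EP in Hu *.
exists l; split; first by move=> Eli; have := Hil; rewrite /= Eli eqxx.
exists q; split; last by rewrite /= plen_map_inl; lra.
split => //; move: Hu; rewrite cons_uniq => /andP [_].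
by rewrite [map _ (_ :: _)]/= hd_map_inl uniq_map_inl.
Qed.

(* Together with the next lemma: in [G^+], d(t_i, u) = min_(l <> i) d_G(s_l, u). *)
Lemma ole_spdist_plus (i : 'I_k) (u : vert G) D :
  (forall l, l <> i -> ole D (spdist x (s l) u)) ->
  ole D (spdist (xplus s x) (inr i : vert Gp) (inl u)).
Proof.
move=> HD; apply: (ole_spdist xplus_ge0) => P /dpath_proj [l [Hl [q [Hq ->]]]].
exact: ole_dle_trans (HD _ Hl) (spdist_le_plen x_ge0 Hq).
Qed.

Lemma spdist_plus_ole (i c : 'I_k) (u : vert G) :
  c <> i -> ole (spdist (xplus s x) (inr i : vert Gp) (inl u)) (spdist x (s c) u).
Proof.
move=> Hci; have Hic : i != c by apply/eqP => Eic; apply: Hci.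
apply: (ole_spdist x_ge0) => q /(dpath_lift Hic) [P [HP <-]].
exact: (spdist_le_plen xplus_ge0 HP).
Qed.

End PlusGraph.

Lemma in_int_intro D xe theta :
  dle D theta -> ~ dle D (theta - xe) -> Defs.in_int D xe theta.
Proof. by case: D => //= a Ha /Rnot_le_lt; lra. Qed.

(* If [j] is the minimizer, the runner-up serves; otherwise the minimizer does. *)
Lemma two_smallest_min_except k (f : 'I_k -> option R) A1 A2 (j : 'I_k) :
  two_smallest f A1 A2 ->
  exists c, c <> j /\ (A1 = f c \/ A2 = f c) /\ forall l, l <> j -> ole (f c) (f l).
Proof.
move=> [i1 [H1 [E1 [i2 [Hne [H2 E2]]]]]].
case: (eqVneq j i1) => [->|Nj]; first by exists i2; split; last split; [| right |].
exists i1; split; last by split; [left | move=> l _].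
by move=> Ei; rewrite Ei eqxx in Nj.
Qed.

Section Rounding.
Variables (G : digraph) (k : nat) (s : 'I_k -> vert G) (x : edge G -> R).
Variables a1 a2 : vert G -> option R.
Hypothesis x_ge0 : forall e, 0 <= x e.
Hypothesis a12_two_smallest :
  forall u, two_smallest (fun i => spdist x (s i) u) (a1 u) (a2 u).

Definition ball_except (j : 'I_k) (theta : R) (u : vert G) : Prop :=
  exists l, l <> j /\ dle (spdist x (s l) u) theta.

Lemma Cprime_out_cut j theta e :
  out_cut (ball_except j theta) e -> Cprime x a1 a2 theta e.
Proof.
move=> [[l [Hl Hu]] Hv].
have [c [Hc [Ha Hmin]]] := two_smallest_min_except j (a12_two_smallest (tl e)).
have Hint : Defs.in_int (spdist x (s c) (tl e)) (x e) theta.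
  apply: in_int_intro; first exact: ole_dle_trans (Hmin _ Hl) Hu.
  move=> /(dle_spdist_edge x_ge0) Hhd; apply: Hv; exists c; split => //.
  by apply: dle_le_trans Hhd _; lra.
by rewrite /Cprime; case: Ha => ->; [left | right].
Qed.

Lemma ballT_inl i theta u : ballT s x i theta (inl u) <-> ball_except i theta u.
Proof.
split => [Hb|[l [Hl Hu]]].
  have [c [Hc [_ Hmin]]] := two_smallest_min_except i (a12_two_smallest u).
  by exists c; split => //; apply: ole_dle_trans (ole_spdist_plus x_ge0 Hmin) Hb.
exact: ole_dle_trans (spdist_plus_ole s x_ge0 u Hl) Hu.
Qed.

Lemma Ccut_Cprime theta f : 0 < theta ->
  Ccut s x theta f -> exists e, f = inl e /\ Cprime x a1 a2 theta e.
Proof.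
move=> Ht [i [Htl Hhd]]; case: f Htl Hhd => [e|pe] Htl Hhd.
  exists e; split => //; apply: (@Cprime_out_cut i).
  by split; [apply/ballT_inl | move/ballT_inl].
(* [(t_i', s_j)] starts in the ball around [t_i] only if [i' = i], and then [s_j] is at distance 0 *)
case: pe Htl Hhd => [[i' j] Hij] /= Htl Hhd; exfalso.
have [P [HP _]] := spdist_path (xplus_ge0 x_ge0) Htl; case: (walk_to_inr HP) => Ei; subst i'.
have Hd : @dpath (Gplus s) (inr i) (inl (s j)) [:: inr (exist _ (i, j) Hij)].
  by split => //=; rewrite inE.
by apply: Hhd; apply: dle_le_trans (spdist_le_plen (xplus_ge0 x_ge0) Hd) _ => /=; lra.
Qed.

Lemma Cprime_multiway_cut theta : feasible s x -> 0 < theta < 1 ->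
  is_dir_multiway_cut s (Cprime x a1 a2 theta).
Proof.
move=> [_ Hfeas] Ht i j Hij p [Hp _].
have Hsi : ball_except j theta (s i).
  exists i; split => //; have Hd : dpath (s i) (s i) [::] by [].
  by apply: dle_le_trans (spdist_le_plen x_ge0 Hd) _ => /=; lra.
have Hsj : ~ ball_except j theta (s j).
  move=> [l [Hl Hd]].
  have := ole_dle_trans (ole_spdist x_ge0 (D := Some 1) (fun q => Hfeas l j Hl q)) Hd.
  by rewrite /=; lra.
have [e [He Hcut]] := walk_out_cut Hp Hsi Hsj.
by exists e; split => //; apply: Cprime_out_cut Hcut.
Qed.

End Rounding.

Lemma indicT (P : Prop) : P -> indic P = 1.
Proof. by rewrite /indic; case: excluded_middle_informative. Qed.

Lemma indicF (P : Prop) : ~ P -> indic P = 0.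
Proof. by rewrite /indic; case: excluded_middle_informative. Qed.

Lemma indic_iff (P Q : Prop) : (P <-> Q) -> indic P = indic Q.
Proof.
move=> PQ; case: (classic P) => HP.
  by rewrite !indicT //; apply/PQ.
by rewrite !indicF // => /PQ.
Qed.

Lemma indic_or (P Q : Prop) : indic (P \/ Q) = indic P + indic Q - indic (P /\ Q).
Proof.
case: (classic P) => HP; case: (classic Q) => HQ.
- by rewrite !indicT //; [lra | left].
- by rewrite (indicT (or_introl HP)) (indicT HP) (indicF HQ) indicF; [lra | case].
- by rewrite (indicT (or_intror HQ)) (indicF HP) (indicT HQ) indicF; [lra | case].
- by rewrite !indicF //; [lra | case | case].
Qed.

Definition clamp01 (c : R) : R := Rmax 0 (Rmin c 1).

Lemma clamp01_sub a b : a <= b -> 0 <= clamp01 b - clamp01 a <= b - a.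
Proof. by rewrite /clamp01 /Rmax /Rmin => Hab; do 4 case: Rle_dec; lra. Qed.

Lemma is_RInt_indic_ge c : is_RInt (fun t => indic (c <= t)) 0 1 (1 - clamp01 c).
Proof.
have Hc : 0 <= clamp01 c <= 1 by rewrite /clamp01 /Rmax /Rmin; do 2 case: Rle_dec; lra.
have Hlt t : 0 < t < clamp01 c -> ~ c <= t.
  by rewrite /clamp01 /Rmax /Rmin; do 2 case: Rle_dec; lra.
have Hgt t : clamp01 c < t < 1 -> c <= t.
  by rewrite /clamp01 /Rmax /Rmin; do 2 case: Rle_dec; lra.
have -> : 1 - clamp01 c = plus (scal (clamp01 c - 0) 0) (scal (1 - clamp01 c) 1).
  by rewrite /plus /scal /= /mult /=; lra.
apply: (is_RInt_Chasles _ _ (clamp01 c)); apply: is_RInt_ext (is_RInt_const _ _ _) => t.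
  by rewrite Rmin_left ?Rmax_right; try lra; move=> Ht; rewrite indicF //; apply: Hlt.
by rewrite Rmin_left ?Rmax_right; try lra; move=> Ht; rewrite indicT //; apply: Hgt.
Qed.

Lemma is_RInt_indic_Ico a b : a <= b ->
  is_RInt (fun t => indic (a <= t < b)) 0 1 (clamp01 b - clamp01 a).
Proof.
move=> Hab; have HI := is_RInt_minus _ _ _ _ _ _ (is_RInt_indic_ge (c := a)) (is_RInt_indic_ge (c := b)).
have -> : clamp01 b - clamp01 a = minus (1 - clamp01 a) (1 - clamp01 b).
  by rewrite /minus /plus /opp /=; lra.
apply: is_RInt_ext HI => t _; rewrite /minus /plus /opp /=.
case: (Rle_dec a t) => Ha; case: (Rle_dec b t) => Hb.
- by rewrite (indicT Ha) (indicT Hb) indicF; lra.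
- by rewrite (indicT Ha) (indicF Hb) indicT; lra.
- lra.
- by rewrite (indicF Ha) (indicF Hb) indicF; lra.
Qed.

(* inclusion-exclusion, the intersection of the two intervals being again an interval *)
Lemma is_RInt_indic_Ico_or a1 b1 a2 b2 : a1 <= b1 -> a2 <= b2 ->
  exists V, is_RInt (fun t => indic (a1 <= t < b1 \/ a2 <= t < b2)) 0 1 V /\
            V <= (b1 - a1) + (b2 - a2).
Proof.
move=> H1 H2; set a3 := Rmax a1 a2; set b3 := Rmax a3 (Rmin b1 b2).
have H3 : a3 <= b3 by apply: Rmax_l.
have Hcap t : (a1 <= t < b1 /\ a2 <= t < b2) <-> a3 <= t < b3.
  by rewrite /b3 /a3 /Rmax /Rmin; do 3 case: Rle_dec; split; lra.
have HI := is_RInt_minus _ _ _ _ _ _ (is_RInt_plus _ _ _ _ _ _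
  (is_RInt_indic_Ico H1) (is_RInt_indic_Ico H2)) (is_RInt_indic_Ico H3).
eexists; split; first apply: is_RInt_ext HI => t _.
  by rewrite indic_or (indic_iff (Hcap t)) /minus /plus /opp /=; lra.
rewrite /minus /plus /opp /=.
by have := clamp01_sub H1; have := clamp01_sub H2; have := clamp01_sub H3; lra.
Qed.

Lemma in_int_Ico (a : option R) xe : 0 <= xe ->
  exists lo hi, lo <= hi <= lo + xe /\ forall t, Defs.in_int a xe t <-> lo <= t < hi.
Proof.
case: a => [a|] Hx /=; first by exists a, (a + xe); split; [lra | ].
by exists 0, 0; split; [lra | move=> t; split => //; lra].
Qed.

Lemma is_RInt_indic_Cprime (G : digraph) (x : edge G -> R) a1 a2 e : 0 <= x e ->
  exists V, is_RInt (fun theta => indic (Cprime x a1 a2 theta e)) 0 1 V /\ V <= 2 * x e.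
Proof.
move=> Hx.
have [lo1 [hi1 [H1 E1]]] := in_int_Ico (a1 (tl e)) Hx.
have [lo2 [hi2 [H2 E2]]] := in_int_Ico (a2 (tl e)) Hx.
have [V [HV HVle]] := is_RInt_indic_Ico_or (proj1 H1) (proj1 H2).
exists V; split; last by lra.
eapply is_RInt_ext; last exact: HV.
by move=> t _; apply: indic_iff; rewrite /Cprime E1 E2.
Qed.

Lemma is_RInt_big_sum (I : Type) (r : seq I) (w : I -> R) (f : I -> R -> R) (V : I -> R) a b :
  (forall i, is_RInt (f i) a b (V i)) ->
  is_RInt (fun t => \big[Rplus/0]_(i <- r) (w i * f i t)) a b
          (\big[Rplus/0]_(i <- r) (w i * V i)).
Proof.
move=> Hf; elim: r => [|i r IH].
  have := is_RInt_const a b 0; rewrite /scal /= /mult /= Rmult_0_r big_nil.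
  by apply: is_RInt_ext => t _; rewrite big_nil.
have := is_RInt_plus _ _ _ _ _ _ (is_RInt_scal _ _ _ (w i) _ (Hf i)) IH.
by rewrite big_cons; apply: is_RInt_ext => t _; rewrite big_cons.
Qed.

Lemma RiemannInt_le_of_is_RInt f a b V B : is_RInt f a b V -> V <= B ->
  exists pr : Riemann_integrable f a b, RiemannInt pr <= B.
Proof.
move=> HV HVB; have Hex : ex_RInt f a b by exists V.
by exists (ex_RInt_Reals_0 _ _ _ Hex); rewrite -RInt_Reals (is_RInt_unique _ _ _ _ HV).
Qed.

Theorem mainTheorem5 (G : digraph) (k : nat) (s : 'I_k -> vert G)
  (w x : edge G -> R) (a1 a2 : vert G -> option R) :
  (2 <= k)%nat ->
  injective s ->
  (forall e, 0 <= w e) ->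
  feasible s x ->
  (forall u, two_smallest (fun i => spdist x (s i) u) (a1 u) (a2 u)) ->
  (forall theta, 0 < theta < 1 ->
     (forall f, Ccut s x theta f -> exists e, f = inl e /\ Cprime x a1 a2 theta e) /\
     is_dir_multiway_cut s (Cprime x a1 a2 theta)) /\
  (forall e, exists pr : Riemann_integrable (fun theta => indic (Cprime x a1 a2 theta e)) 0 1,
     RiemannInt pr <= 2 * x e) /\
  (exists pr : Riemann_integrable
                 (fun theta => sumE (fun e => w e * indic (Cprime x a1 a2 theta e))) 0 1,
     RiemannInt pr <= 2 * sumE (fun e => w e * x e)).
Proof.
move=> _ _ w_ge0 Hfeas Hts; have x_ge0 := Hfeas.1.
pose F e theta := indic (Cprime x a1 a2 theta e).
have HF e : is_RInt (F e) 0 1 (RInt (F e) 0 1) /\ RInt (F e) 0 1 <= 2 * x e.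
  have [V [HV HVle]] := is_RInt_indic_Cprime a1 a2 (x_ge0 e).
  by rewrite (is_RInt_unique _ _ _ _ HV).
split.
  move=> theta Ht; split => [f|]; first exact: (Ccut_Cprime x_ge0 Hts Ht.1).
  exact: (Cprime_multiway_cut x_ge0 Hts Hfeas Ht).
split; first by move=> e; exact: (RiemannInt_le_of_is_RInt (HF e).1 (HF e).2).
rewrite /sumE; eapply RiemannInt_le_of_is_RInt.
  exact: (is_RInt_big_sum (w := w) (fun e => (HF e).1)).
apply: (big_ind2 (fun a b => a <= 2 * b)) => [|? ? ? ?|e _]; try lra.
by have := (HF e).2; have := w_ge0 e; nra.
Qed.
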